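(* For every $A\subset\Omega$, $$\overline{F_A}=\{\phi\in\mathcal H:\phi_\pi\in\overline{F_A\cap\mathcal H_\pi}\}=\overline{F_A\cap\mathcal H_\pi}\oplus\mathcal H_\pi^\perp,$$ $$F_A^\perp=(F_A\cap\mathcal H_\pi)^\perp\cap\mathcal H_\pi,$$ and $$\overline{F_A}\cap\mathcal H_\pi=\overline{F_A\cap\mathcal H_\pi}.$$
   Context: Let $\mathcal H$ be a complex Hilbert space; $\overline V$ is the closure of $V\subset\mathcal H$. A projection is a bounded self-adjoint idempotent operator; $\wedge_\alpha p_\alpha$ is the projection onto the intersection of ranges. Let $S$ be a set; for each $t\in S$ let $\Gamma(t)$ be a countable set and for $a\in\Gamma(t)$ let $p^t_a$ be a projection on $\mathcal H$ with $\sum_{a\in\Gamma(t)}p^t_a=I$ (strong convergence). Let $\pi=\{p^t_a\}$ and $p^{t_1,\dots,t_k}_{a_1,\dots,a_k}=\wedge_{i=1}^kp^{t_i}_{a_i}$. $\pi$ commutes on $\phi$ if $W\phi=V\phi$ whenever $W,V$ are finite products of elements of $\pi$ with the same factors (with multiplicity) in possibly different orders; $\mathcal H_\pi$ is the closed subspace of such $\phi$, $p_\pi$ its projection, $\phi_\pi=p_\pi\phi$. Let $\Omega=\prod_{t\in S}\Gamma(t)$. For $A\subset\Omega$, $F_A=\{\phi\in\mathcal H:$ for every $\omega\in A$ there are $t_1,\dots,t_k\in S$ with $p^{t_1,\dots,t_k}_{\omega_{t_1},\dots,\omega_{t_k}}\phi=0\}$ (a vector space). *)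

From HB Require Import structures.
From mathcomp Require Import all_boot all_order all_algebra.
From mathcomp Require Import reals complex.
From Stdlib Require List.
From Stdlib Require Import Permutation ClassicalEpsilon.

Set Implicit Arguments.
Unset Strict Implicit.
Unset Printing Implicit Defensive.

Import Order.TTheory GRing.Theory Num.Theory.
Local Open Scope ring_scope.

Section Hilbert.
Context (R : realType) (H : lmodType R[i]) (ip : H -> H -> R[i]).

Definition hnorm (x : H) : R := Num.sqrt (complex.Re (ip x x)).

Definition hilbert_space : Prop :=
  [/\ (forall (a : R[i]) (x y z : H), ip (a *: x + y) z = a * ip x z + ip y z),
      (forall x y : H, ip y x = conjc (ip x y)),
      (forall x : H, 0 <= ip x x),
      (forall x : H, ip x x = 0 -> x = 0) &
      (forall u : nat -> H,
         (forall e : R, 0 < e -> exists N : nat, forall m n : nat,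
              (N <= m)%N -> (N <= n)%N -> hnorm (u m - u n) < e) ->
         exists l : H, forall e : R, 0 < e -> exists N : nat, forall n : nat,
              (N <= n)%N -> hnorm (u n - l) < e)].

Definition hclosure (V : H -> Prop) : H -> Prop :=
  fun x => forall e : R, 0 < e -> exists v, V v /\ hnorm (x - v) < e.

Definition horth (V : H -> Prop) : H -> Prop :=
  fun x => forall v, V v -> ip x v = 0.

Definition capset (V W : H -> Prop) : H -> Prop := fun x => V x /\ W x.

Definition sumset (V W : H -> Prop) : H -> Prop :=
  fun x => exists v w, V v /\ W w /\ x = v + w.

Definition prange (P : H -> H) : H -> Prop := fun y => exists x, y = P x.

Definition is_projection (P : H -> H) : Prop :=
  [/\ (forall (a : R[i]) (x y : H), P (a *: x + y) = a *: P x + P y),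
      (exists M : R, forall x, hnorm (P x) <= M * hnorm x),
      (forall x y, ip (P x) y = ip x (P y)) &
      (forall x, P (P x) = P x)].

Definition proj_onto (M : H -> Prop) : H -> H :=
  epsilon (inhabits (fun x : H => x))
    (fun P => is_projection P /\ forall y, M y <-> prange P y).

Definition meet_proj (ps : list (H -> H)) : H -> H :=
  proj_onto (fun y => forall P, List.In P ps -> prange P y).

Context (S : Type) (Gamma : S -> countType) (p : forall t, Gamma t -> H -> H).

(* sum_{a in Gamma t} p^t_a = I, in the strong (unconditional) sense *)
Definition sums_to_identity (t : S) : Prop :=
  forall phi : H, forall e : R, 0 < e ->
    exists s0 : seq (Gamma t), forall s : seq (Gamma t),
      uniq s -> {subset s0 <= s} ->
      hnorm (phi - \sum_(a <- s) p a phi) < e.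

(* elements of pi are indexed by pairs (t, a) *)
Definition pidx := {t : S & Gamma t}.
Definition pop (i : pidx) : H -> H := p (projT2 i).

Definition prod_ops (l : list pidx) : H -> H :=
  foldr (fun i f => fun x => pop i (f x)) (fun x => x) l.

Definition commutes_on (phi : H) : Prop :=
  forall l1 l2 : list pidx, Permutation l1 l2 -> prod_ops l1 phi = prod_ops l2 phi.

Definition H_pi : H -> Prop := commutes_on.
Definition p_pi : H -> H := proj_onto H_pi.

Definition F_A (A : (forall t, Gamma t) -> Prop) : H -> Prop :=
  fun phi => forall omega, A omega ->
    exists ts : seq S, ts <> [::] /\
      meet_proj ([seq p (omega t) | t <- ts]) phi = 0.

End Hilbert.

From HB Require Import structures.
From mathcomp Require Import all_boot all_order all_algebra.
From mathcomp Require Import reals complex.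
From mathcomp Require Import classical_sets.
From mathcomp Require Import ring lra.
From Stdlib Require List.
From Stdlib Require Import Permutation ClassicalEpsilon Classical.

(* Let P be the orthogonal projection onto H_pi.  It commutes with every p^t_a, so F_A is
   P-invariant and P maps the closure of F_A into the closure of F_A ∩ H_pi.  The heart of
   the matter is that every vector orthogonal to H_pi lies in the closure of F_A.
   First, a vector h orthogonal to F_A lies in H_pi.  Let W, V be products of the same
   elements of pi.  As the p^t_a (a ∈ Γ(t)) sum to I they are mutually orthogonal, so on
   the common fixed space of the p^t_(ω t), t occurring in W, each factor acts as 0 or 1
   and W = V there.  Hence the component r of h orthogonal to the closed subspace
   {y | W y = V y} lies in F_A; being orthogonal both to h and to h - r, it vanishes, so
   W h = V h.  For ψ ∈ H_pi^⊥, the component of ψ orthogonal to the closure of F_A thus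
   lies in H_pi, hence is orthogonal to itself and vanishes.  The identities follow by
   splitting φ = P φ + (φ - P φ).  Orthogonal projections onto closed subspaces come from
   the projection theorem: a distance-minimizing sequence is Cauchy by the parallelogram
   law. *)

Set Implicit Arguments.
Unset Strict Implicit.
Unset Printing Implicit Defensive.

Import Order.TTheory GRing.Theory Num.Theory.
Local Open Scope ring_scope.
Local Open Scope complex_scope.

Local Notation Re := complex.Re.
Local Notation Im := complex.Im.

Lemma ler0_eps (R : realFieldType) (a c : R) :
  0 <= c -> (forall e, 0 < e -> a <= c * e) -> a <= 0.
Proof.
move=> c0 h; apply/ler_addgt0Pr => e e0; rewrite add0r.
have c1 : 0 < c + 1 by lra.
have := h _ (divr_gt0 e0 c1); rewrite mulrA => /le_trans; apply.
by rewrite ler_pdivrMr //; nra.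
Qed.

Section ComplexParts.
Variable R : rcfType.
Implicit Types (a b : R[i]) (s : R).

Lemma ReD a b : Re (a + b) = Re a + Re b.
Proof. by case: a; case: b. Qed.

Lemma ReN a : Re (- a) = - Re a.
Proof. by case: a. Qed.

Lemma ReJ a : Re (conjc a) = Re a.
Proof. by case: a. Qed.

Lemma ReMr s a : Re (s%:C * a) = s * Re a.
Proof. by case: a => x y /=; rewrite mul0r subr0. Qed.

Lemma Re_Ji a : Re (conjc 'i * a) = Im a.
Proof. by case: a => x y /=; lra. Qed.

Lemma Re_sum (I : Type) (r : seq I) (F : I -> R[i]) :
  Re (\sum_(c <- r) F c) = \sum_(c <- r) Re (F c).
Proof. by elim: r => [|c r IH]; rewrite ?big_nil ?big_cons // ReD IH. Qed.

Lemma complex_eq0 a : Re a = 0 -> Im a = 0 -> a = 0.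
Proof. by case: a => x y /= -> ->. Qed.

Lemma mulcJ a : a * conjc a = ((Re a) ^+ 2 + (Im a) ^+ 2)%:C.
Proof.
case: a => x y; rewrite /= /GRing.mul /= /real_complex_def.
by congr (_ +i* _); lra.
Qed.

End ComplexParts.

Lemma linear_term_eq0 (R : realFieldType) (r n : R) :
  0 <= n -> (forall s, 2 * s * r <= s ^+ 2 * n) -> r = 0.
Proof.
move=> n0 h; pose s := r / (n + 1).
have hs : s * (n + 1) = r by rewrite mulfVK //; apply: lt0r_neq0; lra.
suff : r ^+ 2 * (n + 2) <= 0.
  by move=> h2; apply/eqP; rewrite -sqrf_eq0 eq_le sqr_ge0 andbT; nra.
have := ler_wpM2l (sqr_ge0 (n + 1)) (h s).
have -> : r ^+ 2 * (n + 2) =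
    (n + 1) ^+ 2 * (2 * s * r) - (n + 1) ^+ 2 * (s ^+ 2 * n) by rewrite -hs; ring.
lra.
Qed.

Lemma ler_invS (R : numFieldType) (m n : nat) :
  (m <= n)%N -> (n.+1%:R : R)^-1 <= (m.+1%:R)^-1.
Proof. by move=> h; rewrite lef_pV2 ?posrE ?ltr0Sn ?ler_nat. Qed.

Section InnerProduct.
Variables (R : realType) (H : lmodType R[i]) (ip : H -> H -> R[i]).

Definition inner_product : Prop :=
  [/\ (forall (a : R[i]) (x y z : H), ip (a *: x + y) z = a * ip x z + ip y z),
      (forall x y : H, ip y x = conjc (ip x y)),
      (forall x : H, 0 <= ip x x) &
      (forall x : H, ip x x = 0 -> x = 0)].

Definition hcauchy (u : nat -> H) : Prop :=
  forall e : R, 0 < e -> exists N : nat, forall m n : nat,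
    (N <= m)%N -> (N <= n)%N -> hnorm ip (u m - u n) < e.

Definition hlim (u : nat -> H) (l : H) : Prop :=
  forall e : R, 0 < e -> exists N : nat, forall n : nat,
    (N <= n)%N -> hnorm ip (u n - l) < e.

Definition hcomplete : Prop := forall u, hcauchy u -> exists l, hlim u l.

Lemma hilbert_spaceP : hilbert_space ip <-> inner_product /\ hcomplete.
Proof. by split=> [[? ? ? ? ?] | [[? ? ? ?] ?]]. Qed.

Definition nsq (x : H) : R := Re (ip x x).

Definition subspace (M : H -> Prop) : Prop :=
  M 0 /\ forall a x y, M x -> M y -> M (a *: x + y).

Definition hclosed (M : H -> Prop) : Prop := forall x, hclosure ip M x -> M x.

Definition linear_op (T : H -> H) : Prop :=
  forall a x y, T (a *: x + y) = a *: T x + T y.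

Definition bounded_op (T : H -> H) : Prop :=
  linear_op T /\ exists B, forall x, nsq (T x) <= B * nsq x.

Hypothesis ip_ax : inner_product.

Let ipDZl a x y z : ip (a *: x + y) z = a * ip x z + ip y z.
Proof. by case: ip_ax. Qed.

Lemma ipC x y : ip y x = conjc (ip x y).
Proof. by case: ip_ax. Qed.

Lemma ip_self_ge0 x : 0 <= ip x x.
Proof. by case: ip_ax. Qed.

Lemma ip_self_eq0 x : ip x x = 0 -> x = 0.
Proof. by case: ip_ax => _ _ _; apply. Qed.

Lemma ip0l z : ip 0 z = 0.
Proof.
have := ipDZl 1 0 0 z; rewrite scaler0 addr0 mul1r => /eqP.
by rewrite -{1}[ip 0 z]addr0 eq_sym => /eqP /addrI.
Qed.

Lemma ipDl x y z : ip (x + y) z = ip x z + ip y z.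
Proof. by have := ipDZl 1 x y z; rewrite scale1r mul1r. Qed.

Lemma ipZl a x z : ip (a *: x) z = a * ip x z.
Proof. by have := ipDZl a x 0 z; rewrite addr0 ip0l addr0. Qed.

Lemma ipNl x z : ip (- x) z = - ip x z.
Proof. by rewrite -scaleN1r ipZl mulN1r. Qed.

Lemma ipBl x y z : ip (x - y) z = ip x z - ip y z.
Proof. by rewrite ipDl ipNl. Qed.

Lemma ip0r z : ip z 0 = 0.
Proof. by rewrite ipC ip0l conjc0. Qed.

Lemma ipDr x y z : ip z (x + y) = ip z x + ip z y.
Proof. by rewrite (ipC x z) (ipC y z) [LHS]ipC ipDl rmorphD. Qed.

Lemma ipZr a x z : ip z (a *: x) = conjc a * ip z x.
Proof. by rewrite (ipC x z) [LHS]ipC ipZl rmorphM. Qed.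

Lemma ipNr x z : ip z (- x) = - ip z x.
Proof. by rewrite (ipC x z) [LHS]ipC ipNl rmorphN. Qed.

Lemma ipBr x y z : ip z (x - y) = ip z x - ip z y.
Proof. by rewrite ipDr ipNr. Qed.

Lemma ip_suml (I : Type) (r : seq I) (F : I -> H) x :
  ip (\sum_(c <- r) F c) x = \sum_(c <- r) ip (F c) x.
Proof. by elim: r => [|c r IH]; rewrite ?big_nil ?big_cons ?ip0l // ipDl IH. Qed.

Lemma ip_eq0C x y : ip x y = 0 -> ip y x = 0.
Proof. by move=> h; rewrite ipC h conjc0. Qed.

Lemma orth_sub_eq x y : ip x (x - y) = 0 -> ip y (x - y) = 0 -> x = y.
Proof.
move=> hx hy; apply/eqP; rewrite -subr_eq0; apply/eqP/ip_self_eq0.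
by rewrite ipBl hx hy subrr.
Qed.

Lemma ip_nsq x : ip x x = (nsq x)%:C.
Proof.
have /ger0_Im := ip_self_ge0 x; rewrite /nsq.
by case: (ip x x) => a b /= ->.
Qed.

Lemma nsq_ge0 x : 0 <= nsq x.
Proof. by have := ip_self_ge0 x; rewrite ip_nsq ler0c. Qed.

Lemma nsq_eq0 x : nsq x = 0 -> x = 0.
Proof. by move=> h; apply: ip_self_eq0; rewrite ip_nsq h. Qed.

Lemma nsq0 : nsq 0 = 0.
Proof. by rewrite /nsq ip0l. Qed.

Lemma nsqN x : nsq (- x) = nsq x.
Proof. by rewrite /nsq ipNl ipNr opprK. Qed.

Lemma nsqD x y : nsq (x + y) = nsq x + 2 * Re (ip x y) + nsq y.
Proof. by rewrite /nsq ipDl !ipDr (ipC y x) !ReD ReJ; lra. Qed.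

Lemma nsqB x y : nsq (x - y) = nsq x - 2 * Re (ip x y) + nsq y.
Proof. by rewrite nsqD nsqN ipNr ReN; lra. Qed.

Lemma nsqZ c x : nsq (c *: x) = ((Re c) ^+ 2 + (Im c) ^+ 2) * nsq x.
Proof. by rewrite /nsq ipZl ipZr mulrA mulcJ ip_nsq -rmorphM. Qed.

Lemma nsqZr (s : R) x : nsq (s%:C *: x) = s ^+ 2 * nsq x.
Proof. by rewrite nsqZ /= expr0n /= addr0. Qed.

Lemma nsq_parallelogram x y : nsq (x + y) + nsq (x - y) = 2 * nsq x + 2 * nsq y.
Proof. by rewrite nsqD nsqB; lra. Qed.

Lemma nsqD_le x y : nsq (x + y) <= 2 * nsq x + 2 * nsq y.
Proof. by have := nsq_parallelogram x y; have := nsq_ge0 (x - y); lra. Qed.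

Lemma nsqD_le_eps x y (s : R) :
  0 < s -> nsq (x + y) <= (1 + s) * nsq x + (1 + s^-1) * nsq y.
Proof.
move=> s0; have := nsq_ge0 (s%:C *: x - y).
rewrite nsqB nsqZr ipZl ReMr nsqD; set r := Re (ip x y) => h.
suff : 2 * r <= s * nsq x + s^-1 * nsq y by lra.
have st : s * s^-1 = 1 by rewrite mulfV // lt0r_neq0.
have si0 : 0 <= s^-1 by rewrite invr_ge0 ltW.
have := mulr_ge0 si0 h.
have -> : s^-1 * (s ^+ 2 * nsq x - 2 * (s * r) + nsq y) =
          (s * s^-1) * (s * nsq x) - 2 * (s * s^-1) * r + s^-1 * nsq y by ring.
by rewrite st; lra.
Qed.

Lemma Re_ip_sqr_le x y : (Re (ip x y)) ^+ 2 <= nsq x * nsq y.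
Proof.
have [/nsq_eq0 ->|ny] := eqVneq (nsq y) 0.
  by rewrite ip0r nsq0 mulr0 /= expr0n.
have ny0 : 0 < nsq y by rewrite lt_def ny nsq_ge0.
set r := Re (ip x y); set s := - r / nsq y.
have hs : s * nsq y = - r by rewrite /s mulfVK.
have := nsq_ge0 (x + s%:C *: y); rewrite nsqD nsqZr ipZr conjc_real ReMr -/r.
by have := nsq_ge0 x; nra.
Qed.

Lemma Im_ip_sqr_le x y : (Im (ip x y)) ^+ 2 <= nsq x * nsq y.
Proof.
have := Re_ip_sqr_le x ('i *: y).
by rewrite ipZr Re_Ji nsqZ /= expr0n /= expr1n add0r mul1r.
Qed.

Lemma hnorm_lt x e : 0 < e -> (hnorm ip x < e) = (nsq x < e ^+ 2).
Proof.
move=> e0; rewrite /hnorm -[e in LHS](@ger0_norm _ e) ?ltW // -sqrtr_sqr.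
by rewrite ltr_sqrt // exprn_gt0.
Qed.

Lemma hclosure_nsq M x :
  hclosure ip M x <-> forall e, 0 < e -> exists v, M v /\ nsq (x - v) < e.
Proof.
split=> h e e0.
  have se : 0 < Num.sqrt e by rewrite sqrtr_gt0.
  have [v [Mv]] := h _ se.
  by rewrite hnorm_lt // (sqr_sqrtr (ltW e0)); exists v.
have [v [Mv hv]] := h (e ^+ 2) (exprn_gt0 _ e0).
by exists v; rewrite hnorm_lt.
Qed.

Lemma subset_hclosure (M : H -> Prop) x : M x -> hclosure ip M x.
Proof. by move=> Mx; apply/hclosure_nsq => e e0; exists x; rewrite subrr nsq0. Qed.

Lemma hclosureS (M M' : H -> Prop) x :
  (forall y, M y -> M' y) -> hclosure ip M x -> hclosure ip M' x.
Proof. by move=> h /hclosure_nsq hx; apply/hclosure_nsq => e /hx [v [/h]]; exists v. Qed.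

Lemma hclosed_hclosure (M : H -> Prop) : hclosed (hclosure ip M).
Proof.
move=> x /hclosure_nsq hx; apply/hclosure_nsq => e e0.
have e4 : 0 < e / 4 by rewrite divr_gt0.
have [v [/hclosure_nsq Mv hv]] := hx _ e4; have [w [Mw hw]] := Mv _ e4.
exists w; split => //; rewrite -(subrKA v).
by apply: le_lt_trans (nsqD_le _ _) _; lra.
Qed.

Lemma horth_hclosure (M : H -> Prop) x : horth ip M x -> horth ip (hclosure ip M) x.
Proof.
move=> hx y /hclosure_nsq hy.
suff part_eq0 (f : R[i] -> R) : (forall u w, (f (ip u w)) ^+ 2 <= nsq u * nsq w) ->
    f (ip x y) = 0.
  by apply: complex_eq0; apply: part_eq0; [exact: Re_ip_sqr_le | exact: Im_ip_sqr_le].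
move=> CS; apply/eqP; rewrite -sqrf_eq0 eq_le sqr_ge0 andbT.
apply: (ler0_eps (nsq_ge0 x)) => e e0; have [v [Mv hv]] := hy e e0.
have -> : ip x y = ip x (y - v) by rewrite ipBr (hx v Mv) subr0.
by apply: le_trans (CS _ _) _; rewrite ler_wpM2l ?nsq_ge0 ?ltW.
Qed.

Lemma linear_op0 T : linear_op T -> T 0 = 0.
Proof.
move=> hT; have := hT 1 0 0; rewrite scaler0 addr0 scale1r => /eqP.
by rewrite -{1}[T 0]addr0 eq_sym => /eqP /addrI.
Qed.

Lemma linear_opB T : linear_op T -> forall x y, T (x - y) = T x - T y.
Proof. by move=> hT x y; rewrite addrC -scaleN1r hT scaleN1r addrC. Qed.

Lemma subspace_eq_op T1 T2 :
  linear_op T1 -> linear_op T2 -> subspace (fun x => T1 x = T2 x).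
Proof.
move=> l1 l2; split=> [|a x y hx hy]; first by rewrite !linear_op0.
by rewrite l1 l2 hx hy.
Qed.

Lemma bounded_op_id : bounded_op (fun x => x).
Proof. by split => //; exists 1 => z; rewrite mul1r. Qed.

Lemma bounded_op_comp T1 T2 :
  bounded_op T1 -> bounded_op T2 -> bounded_op (T1 \o T2).
Proof.
move=> [l1 [B1 h1]] [l2 [B2 h2]]; split=> [a x y|]; first by rewrite /= l2 l1.
exists (`|B1| * `|B2|) => x /=.
have le_norm B z : B * nsq z <= `|B| * nsq z by rewrite ler_wpM2r ?nsq_ge0 ?ler_norm.
apply: (le_trans (h1 _)); apply: (le_trans (le_norm _ _)).
by rewrite -mulrA ler_wpM2l // (le_trans (h2 _)) ?le_norm.
Qed.

Lemma is_projection_bounded P : is_projection ip P -> bounded_op P.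
Proof.
case=> PL [B hB] _ _; split => //; exists (B ^+ 2) => x.
have := hB x; rewrite /hnorm => h.
rewrite -(sqr_sqrtr (nsq_ge0 (P x))) -(sqr_sqrtr (nsq_ge0 x)) -exprMn.
by rewrite lerXn2r ?nnegrE ?sqrtr_ge0 // (le_trans (sqrtr_ge0 _) h).
Qed.

Lemma hclosure_lin (M : H -> Prop) a x y :
  (forall a u v, M u -> M v -> M (a *: u + v)) ->
  hclosure ip M x -> hclosure ip M y -> hclosure ip M (a *: x + y).
Proof.
move=> hM /hclosure_nsq hx /hclosure_nsq hy; apply/hclosure_nsq => e e0.
set k := (Re a) ^+ 2 + (Im a) ^+ 2.
have k0 : 0 <= k by rewrite addr_ge0 // sqr_ge0.
have k4 : 0 < 4 * (k + 1) by lra.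
have e4 : 0 < e / 4 by rewrite divr_gt0.
have [u [Mu hu]] := hx _ (divr_gt0 e0 k4); have [v [Mv hv]] := hy _ e4.
exists (a *: u + v); split; first exact: hM.
rewrite opprD addrACA -scalerBr.
apply: le_lt_trans (nsqD_le _ _) _; rewrite nsqZ -/k.
suff : k * nsq (x - u) <= e / 4 by lra.
move: hu; rewrite ltr_pdivlMr // ler_pdivlMr //.
by have := nsq_ge0 (x - u); nra.
Qed.

Lemma subspace_hclosure (M : H -> Prop) : subspace M -> subspace (hclosure ip M).
Proof.
case=> M0 Mlin; split; first exact: subset_hclosure.
by move=> a x y; apply: hclosure_lin.
Qed.

Lemma hclosure_map (M M' : H -> Prop) T x : bounded_op T ->
  (forall v, M v -> M' (T v)) -> hclosure ip M x -> hclosure ip M' (T x).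
Proof.
move=> [lT [B hB]] hM /hclosure_nsq hx; apply/hclosure_nsq => e e0.
have b0 : 0 < `|B| + 1 by rewrite ltr_wpDl.
have [v [Mv hv]] := hx _ (divr_gt0 e0 b0).
exists (T v); split; first exact: hM.
rewrite -linear_opB //; apply: le_lt_trans (hB _) _.
have := nsq_ge0 (x - v); have := ler_norm B; move: hv; rewrite ltr_pdivlMr //.
by nra.
Qed.

Lemma hclosed_eq_op T1 T2 :
  bounded_op T1 -> bounded_op T2 -> hclosed (fun x => T1 x = T2 x).
Proof.
move=> [l1 [B1 h1]] [l2 [B2 h2]] x /hclosure_nsq hx.
apply/eqP; rewrite -subr_eq0; apply/eqP/nsq_eq0.
apply/eqP; rewrite eq_le nsq_ge0 andbT.
apply: (@ler0_eps _ _ (2 * (`|B1| + `|B2|))); first by rewrite mulr_ge0 // addr_ge0.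
move=> e e0; have [v [hv hN]] := hx e e0.
have -> : T1 x - T2 x = T1 (x - v) - T2 (x - v).
  by rewrite (linear_opB l1) (linear_opB l2) hv opprB addrA subrK.
apply: le_trans (nsqD_le _ _) _; rewrite nsqN.
have := h1 (x - v); have := h2 (x - v).
have := ler_wpM2r (nsq_ge0 (x - v)) (ler_norm B1).
have := ler_wpM2r (nsq_ge0 (x - v)) (ler_norm B2).
have := ler_wpM2l (normr_ge0 B1) (ltW hN).
have := ler_wpM2l (normr_ge0 B2) (ltW hN).
lra.
Qed.

End InnerProduct.

Section ProjectionTheorem.
Variables (R : realType) (H : lmodType R[i]) (ip : H -> H -> R[i]).
Hypothesis ip_ax : inner_product ip.
Local Notation nsq := (nsq ip).

Lemma hnormN x : hnorm ip (- x) = hnorm ip x.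
Proof. by rewrite /hnorm; congr Num.sqrt; exact: (nsqN ip_ax x). Qed.

Lemma hlim_hclosure (M : H -> Prop) u l :
  (forall n, M (u n)) -> hlim ip u l -> hclosure ip M l.
Proof.
move=> Mu ul e e0; have [K hK] := ul e e0; exists (u K); split => //.
by rewrite -hnormN opprB; exact: hK.
Qed.

Lemma hcauchy_inv (u : nat -> H) :
  (forall m n, nsq (u m - u n) <= 2 * n.+1%:R^-1 + 2 * m.+1%:R^-1) -> hcauchy ip u.
Proof.
move=> hu e e0; have e2 : 0 < e ^+ 2 by rewrite exprn_gt0.
pose K := Num.truncn (4 / e ^+ 2); exists K => m n hm hn; rewrite hnorm_lt //.
have hK : 4 * K.+1%:R^-1 < e ^+ 2.
  have := truncnS_gt (4 / e ^+ 2).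
  by rewrite ltr_pdivrMr // -/K -ltr_pdivrMl ?ltr0Sn // mulrC.
have hm' : m.+1%:R^-1 <= K.+1%:R^-1 :> R by exact: ler_invS.
have hn' : n.+1%:R^-1 <= K.+1%:R^-1 :> R by exact: ler_invS.
have := hu m n.
by move: hK hm' hn'; set a := m.+1%:R^-1; set b := n.+1%:R^-1; set c := K.+1%:R^-1; lra.
Qed.

Lemma nsq_hlim_le x d u l : 0 <= d -> hlim ip u l ->
  (forall n, nsq (x - u n) < d + n.+1%:R^-1) -> nsq (x - l) <= d.
Proof.
move=> d0 ul hu; rewrite -subr_le0; apply: (@ler0_eps _ _ (d + 4)); first lra.
move=> e e0; pose q := Order.min e 1.
have q0 : 0 < q by rewrite lt_min e0 ltr01.
have [qe q1] : q <= e /\ q <= 1 by split; rewrite ge_min lexx ?orbT.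
have q2 : 0 < q ^+ 2 by rewrite exprn_gt0.
have [K1 hK1] := ul q q0.
pose K := maxn K1 (Num.truncn (q ^+ 2)^-1).
have hB : nsq (u K - l) < q ^+ 2 by rewrite -hnorm_lt //; apply: hK1; exact: leq_maxl.
have hA : nsq (x - u K) < d + q ^+ 2.
  apply: lt_le_trans (hu K) _; rewrite lerD2l (le_trans (ler_invS R (leq_maxr _ _))) //.
  by rewrite -[leRHS]invrK lef_pV2 ?posrE ?ltr0Sn ?invr_gt0 // ltW // truncnS_gt.
have := nsqD_le_eps ip_ax (x - u K) (u K - l) q0; rewrite subrKA.
have hB' : (1 + q^-1) * nsq (u K - l) <= q ^+ 2 + q.
  have : nsq (u K - l) / q <= q by rewrite ler_pdivrMr // -expr2 ltW.
  by rewrite mulrDl mul1r mulrC; lra.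
have := ler_wpM2l (ltW (ltr_wpDl ler01 q0 : 0 < 1 + q)) (ltW hA).
have : q ^+ 2 <= q by rewrite expr2 ler_piMl // ltW.
have : q ^+ 3 <= q ^+ 2 by rewrite exprS ler_piMl // exprn_ge0 // ltW.
have : (d + 4) * q <= (d + 4) * e by rewrite ler_wpM2l //; lra.
by lra.
Qed.

Section Subspace.
Variable M : H -> Prop.
Hypotheses (M_sub : subspace M) (M_closed : hclosed ip M).

Lemma min_dist_horth x m : M m ->
  (forall v, M v -> nsq (x - m) <= nsq (x - v)) -> horth ip M (x - m).
Proof.
move=> Mm hmin v Mv; have [M0 Mlin] := M_sub.
have ReE w : M w -> Re (ip (x - m) w) = 0.
  move=> Mw; apply: (linear_term_eq0 (nsq_ge0 ip_ax w)) => s.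
  have := hmin _ (Mlin s%:C w m Mw Mm).
  have -> : x - (s%:C *: w + m) = (x - m) + (- s)%:C *: w.
    by rewrite opprD addrA addrAC -scaleNr -rmorphN.
  by rewrite [leRHS]nsqD // nsqZr // ipZr // conjc_real ReMr sqrrN; lra.
apply: complex_eq0; first exact: ReE.
have Mi : M ('i *: v) by have := Mlin 'i v 0 Mv M0; rewrite addr0.
by rewrite -Re_Ji -ipZr //; apply: ReE.
Qed.

(* The parallelogram law at the midpoint of [u] and [v]. *)
Lemma nsqB_le_dist x d u v : (forall m, M m -> d <= nsq (x - m)) -> M u -> M v ->
  nsq (u - v) <= 2 * (nsq (x - u) - d) + 2 * (nsq (x - v) - d).
Proof.
move=> hd Mu Mv; have [M0 Mlin] := M_sub.
pose mid := (2^-1 : R[i]) *: u + ((2^-1 : R[i]) *: v + 0).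
have Mmid : M mid by apply: Mlin Mu (Mlin _ _ _ Mv M0).
have mid2 : mid + mid = u + v.
  have half : (2^-1 : R[i]) + 2^-1 = 1 by field.
  by rewrite /mid addr0 addrACA -!scalerDl half !scale1r.
have sum2 : (x - u) + (x - v) = (x - mid) + (x - mid).
  by rewrite addrACA -opprD -mid2 opprD addrACA.
have dif2 : (x - u) - (x - v) = - (u - v) by rewrite opprB addrC addrA subrK opprB.
have := nsq_parallelogram ip_ax (x - u) (x - v).
rewrite sum2 dif2 nsqN // (nsqD ip_ax (x - mid)) -/(nsq (x - mid)).
by have := hd _ Mmid; lra.
Qed.

Hypothesis complete : hcomplete ip.

Lemma min_dist_attained x :
  exists2 l, M l & forall v, M v -> nsq (x - l) <= nsq (x - v).
Proof.
have [M0 _] := M_sub.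
pose D : set R := fun r => exists2 m, M m & r = nsq (x - m).
have hD : has_inf D.
  split; first by exists (nsq (x - 0)); exists 0.
  by exists 0 => r [m _ ->]; exact: nsq_ge0.
have dle m : M m -> inf D <= nsq (x - m) by move=> Mm; apply: (ge_inf hD.2); exists m.
have d0 : 0 <= inf D by apply: lb_le_inf hD.1 _ => r [m _ ->]; exact: nsq_ge0.
have approx n : exists m, M m /\ nsq (x - m) < inf D + n.+1%:R^-1.
  have i0 : 0 < (n.+1%:R : R)^-1 by rewrite invr_gt0 ltr0Sn.
  by have [r [m Mm ->] hr] := inf_adherent i0 hD; exists m.
have [u hu] := boolp.choice approx.
have [l ul] : exists l, hlim ip u l.
  apply/complete/hcauchy_inv => m n.
  apply: le_trans (nsqB_le_dist dle (hu m).1 (hu n).1) _.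
  move: (hu m).2 (hu n).2; set a := (m.+1%:R^-1 : R); set b := (n.+1%:R^-1 : R).
  lra.
exists l => [|v Mv]; first by apply/M_closed/(hlim_hclosure (fun n => (hu n).1) ul).
by apply: le_trans (dle _ Mv); apply: nsq_hlim_le d0 ul (fun n => (hu n).2).
Qed.

Lemma horth_decomposition x : exists m, M m /\ horth ip M (x - m).
Proof.
have [l Ml lmin] := min_dist_attained x.
by exists l; split; last exact: min_dist_horth.
Qed.

End Subspace.
End ProjectionTheorem.

Section OrthogonalProjections.
Variables (R : realType) (H : lmodType R[i]) (ip : H -> H -> R[i]).
Hypothesis ip_ax : inner_product ip.

Definition projection_onto (Q : H -> H) (M : H -> Prop) : Prop :=
  is_projection ip Q /\ forall y, M y <-> prange Q y.

Section OntoSubspace.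
Variable M : H -> Prop.
Hypothesis M_sub : subspace M.

Lemma horth_decomposition_unique x m1 m2 :
  M m1 -> horth ip M (x - m1) -> M m2 -> horth ip M (x - m2) -> m1 = m2.
Proof.
move=> M1 o1 M2 o2; apply/eqP; rewrite -subr_eq0; apply/eqP/(ip_self_eq0 ip_ax).
have [_ Mlin] := M_sub.
have M12 : M (m1 - m2) by rewrite addrC -scaleN1r; apply: Mlin.
have dif : (x - m2) - (x - m1) = m1 - m2 by rewrite opprB addrC addrA subrK.
by rewrite -{1}dif ipBl // o2 // o1 // subrr.
Qed.

Definition orth_proj x := epsilon (inhabits 0) (fun m => M m /\ horth ip M (x - m)).

Hypotheses (M_closed : hclosed ip M) (complete : hcomplete ip).

Lemma orth_proj_spec x : M (orth_proj x) /\ horth ip M (x - orth_proj x).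
Proof. exact: (epsilon_spec _ _ (horth_decomposition ip_ax M_sub M_closed complete x)). Qed.

Lemma orth_proj_eq x m : M m -> horth ip M (x - m) -> orth_proj x = m.
Proof.
by have [Mx ox] := orth_proj_spec x; exact: horth_decomposition_unique Mx ox.
Qed.

Lemma orth_proj_adj x y : ip (orth_proj x) y = ip x (orth_proj y).
Proof.
have [Mx ox] := orth_proj_spec x; have [My oy] := orth_proj_spec y.
rewrite -{2}(subrKC (orth_proj x) x) -{1}(subrKC (orth_proj y) y) ipDl // ipDr //.
by rewrite ox // (ip_eq0C ip_ax (oy _ Mx)).
Qed.

Lemma orth_proj_projection : projection_onto orth_proj M.
Proof.
have [M0 Mlin] := M_sub.
have orth_proj_id y : M y -> orth_proj y = y.
  by move=> My; apply: orth_proj_eq => // v _; rewrite subrr ip0l.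
split; first split.
- move=> a x y; apply: orth_proj_eq; first by apply: Mlin; apply: (orth_proj_spec _).1.
  move=> v Mv; rewrite opprD addrACA -scalerBr ipDl // ipZl //.
  by rewrite (orth_proj_spec x).2 // (orth_proj_spec y).2 // mulr0 addr0.
- exists 1 => x; rewrite mul1r; apply: ler_wsqrtr.
  have [Mx ox] := orth_proj_spec x.
  have := nsqD ip_ax (orth_proj x) (x - orth_proj x).
  rewrite subrKC (ip_eq0C ip_ax (ox _ Mx)) /= -/(nsq ip x) => ->.
  by have := nsq_ge0 ip_ax (x - orth_proj x); rewrite /nsq; lra.
- exact: orth_proj_adj.
- by move=> x; apply/orth_proj_id/(orth_proj_spec x).1.
- move=> y; split=> [My | [x ->]]; last exact: (orth_proj_spec x).1.
  by exists y; rewrite orth_proj_id.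
Qed.

Lemma proj_onto_projection : projection_onto (proj_onto ip M) M.
Proof.
exact: (epsilon_spec _ (projection_onto^~ M) (ex_intro _ orth_proj orth_proj_projection)).
Qed.

End OntoSubspace.

Section OntoProjection.
Variables (Q : H -> H) (M : H -> Prop).
Hypothesis Q_onto : projection_onto Q M.

Lemma projection_onto_mem x : M (Q x).
Proof. by apply/Q_onto.2; exists x. Qed.

Lemma projection_onto_fix y : M y -> Q y = y.
Proof. by move/Q_onto.2 => [z ->]; case: Q_onto.1 => _ _ _ ->. Qed.

Lemma projection_onto_idem x : Q (Q x) = Q x.
Proof. exact/projection_onto_fix/projection_onto_mem. Qed.

Lemma projection_onto_adj x y : ip (Q x) y = ip x (Q y).
Proof. by case: Q_onto.1. Qed.

Lemma projection_onto_horth x : horth ip M (x - Q x).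
Proof.
have [QL _ _ _] := Q_onto.1.
move=> v /projection_onto_fix <-.
by rewrite -projection_onto_adj (linear_opB QL) projection_onto_idem subrr ip0l.
Qed.

Lemma projection_onto_eq0 x : Q x = 0 <-> horth ip M x.
Proof.
split=> [Qx0 v Mv | ox].
  by have := projection_onto_horth x Mv; rewrite Qx0 subr0 => ->.
apply: (ip_self_eq0 ip_ax).
by rewrite projection_onto_adj projection_onto_idem; apply/ox/projection_onto_mem.
Qed.

Lemma projection_onto_eq x m : subspace M -> M m -> horth ip M (x - m) -> Q x = m.
Proof.
move=> M_sub Mm om; apply: (horth_decomposition_unique M_sub _ _ Mm om).
  exact: projection_onto_mem.
exact: projection_onto_horth.
Qed.

Lemma projection_onto_eq_id x : ip x (x - Q x) = 0 -> Q x = x.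
Proof.
move=> hx; apply/esym/(orth_sub_eq ip_ax hx)/(ip_eq0C ip_ax).
exact/projection_onto_horth/projection_onto_mem.
Qed.

End OntoProjection.

Lemma prange_fixE P y : is_projection ip P -> prange P y <-> P y = y.
Proof. by case=> _ _ _ PI; split=> [[x ->] | <-]; [rewrite PI | exists y]. Qed.

Lemma Re_ip_projection P x : is_projection ip P -> Re (ip (P x) x) = nsq ip (P x).
Proof. by case=> _ _ PS PI; rewrite -{1}PI PS. Qed.

Definition common_range (ps : seq (H -> H)) (y : H) : Prop :=
  forall P, List.In P ps -> prange P y.

Section CommonRange.
Variable ps : seq (H -> H).
Hypothesis ps_proj : forall P, List.In P ps -> is_projection ip P.

Lemma subspace_common_range : subspace (common_range ps).
Proof.
have fixE P y : List.In P ps -> prange P y <-> P y = y.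
  by move=> /ps_proj /prange_fixE.
split=> [P hP | a x y hx hy P hP]; apply/(fixE _ _ hP); have [PL _ _ _] := ps_proj hP.
  exact: linear_op0.
by rewrite PL ((fixE _ _ hP).1 (hx _ hP)) ((fixE _ _ hP).1 (hy _ hP)).
Qed.

Lemma hclosed_common_range : hclosed ip (common_range ps).
Proof.
move=> x hx P hP; apply/(prange_fixE _ (ps_proj hP)).
apply: (hclosed_eq_op ip_ax (is_projection_bounded ip_ax (ps_proj hP)) (bounded_op_id ip)).
by apply: hclosureS hx => y /(_ P hP) /(prange_fixE _ (ps_proj hP)).
Qed.

End CommonRange.
End OrthogonalProjections.

Lemma Permutation_all (T : Type) (b : pred T) (l1 l2 : seq T) :
  Permutation l1 l2 -> all b l1 = all b l2.
Proof.
elim=> //= [x l l' _ -> // | x y l | l l' l'' _ h1 _ h2]; first by rewrite andbCA.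
by rewrite h1 h2.
Qed.

Section Family.
Variables (R : realType) (H : lmodType R[i]) (ip : H -> H -> R[i]).
Hypotheses (ip_ax : inner_product ip) (complete : hcomplete ip).
Variables (S : Type) (Gamma : S -> countType) (p : forall t, Gamma t -> H -> H).
Hypothesis p_proj : forall t (a : Gamma t), is_projection ip (p a).
Local Notation nsq := (nsq ip).
Local Notation H_pi := (H_pi p).
Local Notation p_pi := (p_pi ip p).

Lemma pop_projection i : is_projection ip (pop p i).
Proof. exact: p_proj. Qed.

Lemma prod_ops_bounded l : bounded_op ip (prod_ops p l).
Proof.
elim: l => [|i l IH]; first exact: bounded_op_id.
exact: bounded_op_comp (is_projection_bounded ip_ax (pop_projection i)) IH.
Qed.

Lemma prod_ops_cat l1 l2 x :
  prod_ops p (l1 ++ l2)%list x = prod_ops p l1 (prod_ops p l2 x).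
Proof. by elim: l1 => [|i l1 IH] //=; rewrite IH. Qed.

Lemma subspace_H_pi : subspace H_pi.
Proof.
split=> [l1 l2 _ | a x y hx hy l1 l2 hP].
  by rewrite !linear_op0 //; apply: (prod_ops_bounded _).1.
by rewrite !(prod_ops_bounded _).1 (hx _ _ hP) (hy _ _ hP).
Qed.

Lemma hclosed_H_pi : hclosed ip H_pi.
Proof.
move=> x hx l1 l2 hP.
apply: (hclosed_eq_op ip_ax (prod_ops_bounded l1) (prod_ops_bounded l2)).
by apply: hclosureS hx => y; apply.
Qed.

Lemma p_pi_projection : projection_onto ip p_pi H_pi.
Proof. exact (proj_onto_projection ip_ax subspace_H_pi hclosed_H_pi complete). Qed.

Lemma H_pi_pop i x : H_pi x -> H_pi (pop p i x).
Proof.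
move=> hx l1 l2 hP.
have := hx _ _ (Permutation_app_tail [:: i] hP).
by rewrite !prod_ops_cat.
Qed.

Lemma p_pi_pop i x : p_pi (pop p i x) = pop p i (p_pi x).
Proof.
have [PL _ Padj _] := pop_projection i.
apply: (projection_onto_eq ip_ax p_pi_projection subspace_H_pi).
  exact/H_pi_pop/(projection_onto_mem p_pi_projection).
move=> k hk; rewrite -(linear_opB PL) Padj.
exact/(projection_onto_horth ip_ax p_pi_projection)/H_pi_pop.
Qed.

Definition fixed_space (om : forall t, Gamma t) (ts : seq S) (y : H) : Prop :=
  forall t, List.In t ts -> p (om t) y = y.

Lemma meet_proj_eq0 om ts x :
  meet_proj ip [seq p (om t) | t <- ts] x = 0 <-> horth ip (fixed_space om ts) x.
Proof.
pose ps := [seq p (om t) | t <- ts].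
have ps_proj P : List.In P ps -> is_projection ip P.
  by move=> /List.in_map_iff [t [<- _]].
have Q_onto := proj_onto_projection ip_ax (subspace_common_range ps_proj)
  (hclosed_common_range ip_ax ps_proj) complete.
rewrite (projection_onto_eq0 ip_ax Q_onto).
have fixE y : common_range ps y <-> fixed_space om ts y.
  split=> [hy t ht | hy P /List.in_map_iff [t [<- ht]]].
    by apply/(prange_fixE _ (p_proj _)); apply/hy/List.in_map_iff; exists t.
  by apply/(prange_fixE _ (p_proj _)); apply: hy.
by split=> h v /fixE; apply: h.
Qed.

Lemma sums_to_identity_bessel t (s : seq (Gamma t)) x :
  sums_to_identity ip p t -> uniq s -> \sum_(c <- s) nsq (p c x) <= nsq x.
Proof.
move=> hsum us; rewrite -subr_le0; set b := _ - _.
have [//|b0] := lerP b 0.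
suff : b ^+ 2 <= 0 by rewrite leNgt exprn_gt0.
apply: (ler0_eps (nsq_ge0 ip_ax x)) => e e0.
have se : 0 < Num.sqrt e by rewrite sqrtr_gt0.
have [s0 hs0] := hsum x _ se.
pose s' := s ++ [seq c <- undup s0 | c \notin s].
have us' : uniq s'.
  rewrite cat_uniq us filter_uniq ?undup_uniq // andbT /=.
  by apply/hasPn => c; rewrite mem_filter => /andP[].
have ss' : {subset s0 <= s'}.
  by move=> c hc; rewrite mem_cat mem_filter mem_undup hc andbT orbN.
have := hs0 s' us' ss'; rewrite hnorm_lt // (sqr_sqrtr (ltW e0)) => hz.
set z := x - _ in hz.
have Rez : Re (ip z x) = nsq x - \sum_(c <- s') nsq (p c x).
  rewrite ipBl // ReD ReN ip_suml // Re_sum; congr (_ - _).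
  by apply: eq_bigr => c _; exact: Re_ip_projection.
have bRe : b <= - Re (ip z x).
  rewrite /b Rez opprB big_cat /= lerD2r lerDl.
  by apply: sumr_ge0 => c _; exact: nsq_ge0.
have := Re_ip_sqr_le ip_ax z x.
have : nsq z * nsq x <= e * nsq x by rewrite ler_wpM2r ?nsq_ge0 ?ltW.
by nra.
Qed.

Lemma sums_to_identity_orth t (a b : Gamma t) x :
  sums_to_identity ip p t -> a != b -> p b x = x -> p a x = 0.
Proof.
move=> hsum ab hb; apply: (nsq_eq0 ip_ax); apply/eqP; rewrite eq_le (nsq_ge0 ip_ax) andbT.
have uab : uniq [:: a; b] by rewrite /= inE ab.
have := sums_to_identity_bessel x hsum uab.
by rewrite !big_cons big_nil hb addr0 -lerBrDr subrr.
Qed.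

Lemma prod_ops_select (sel : pred (pidx Gamma)) l m :
  (forall i, List.In i l -> pop p i m = if sel i then m else 0) ->
  prod_ops p l m = if all sel l then m else 0.
Proof.
elim: l => [|i l IH] hl //=; rewrite IH => [|j hj]; last by apply: hl; right.
case: (all sel l); first by rewrite andbT; apply: hl; left.
by rewrite andbF linear_op0 //; case: (pop_projection i).
Qed.

Hypothesis p_sum : forall t, sums_to_identity ip p t.

(* Each factor acts on [m] as the identity ([a = om t]) or as zero
   ([sums_to_identity_orth]), whatever the order of the product. *)
Lemma fixed_space_commutes om l1 l2 m : Permutation l1 l2 ->
  fixed_space om [seq projT1 i | i <- l1] m -> prod_ops p l1 m = prod_ops p l2 m.
Proof.
move=> hP hm.
pose sel (i : pidx Gamma) := projT2 i == om (projT1 i).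
have hl1 i : List.In i l1 -> pop p i m = if sel i then m else 0.
  case: i => t a hi; rewrite /sel /pop /=.
  have ht : p (om t) m = m by apply/hm/List.in_map_iff; exists (existT _ t a).
  by case: eqP => [-> // | /eqP ne]; exact: sums_to_identity_orth (p_sum t) ne ht.
have hl2 i : List.In i l2 -> pop p i m = if sel i then m else 0.
  by move=> /(Permutation_in _ (Permutation_sym hP)); exact: hl1.
by rewrite (prod_ops_select hl1) (prod_ops_select hl2) (Permutation_all sel hP).
Qed.

Variable A : (forall t, Gamma t) -> Prop.
Local Notation FA := (F_A ip p A).
Local Notation FApi := (capset FA H_pi).

Lemma F_A_horth x :
  FA x <-> forall om, A om -> exists ts, ts <> [::] /\ horth ip (fixed_space om ts) x.
Proof.
by split=> h om /h [ts [ts0 hts]]; exists ts; split => //; apply/meet_proj_eq0.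
Qed.

Lemma F_A_lin a x y : FA x -> FA y -> FA (a *: x + y).
Proof.
move=> /F_A_horth hx /F_A_horth hy; apply/F_A_horth => om hom.
have [ts1 [ts10 o1]] := hx om hom; have [ts2 [_ o2]] := hy om hom.
exists (ts1 ++ ts2); split; first by case: ts1 ts10 {o1}.
move=> v hv; rewrite ipDl // ipZl // o1 ?o2 ?mulr0 ?addr0 // => t ht; apply: hv.
  by apply: List.in_or_app; right.
by apply: List.in_or_app; left.
Qed.

Lemma subspace_F_A (s0 : S) : subspace FA.
Proof.
split=> [|a x y]; last exact: F_A_lin.
by apply/F_A_horth => om _; exists [:: s0]; split => // v _; rewrite ip0l.
Qed.

Lemma F_A_p_pi x : FA x -> FA (p_pi x).
Proof.
move=> /F_A_horth hx; apply/F_A_horth => om /hx [ts [ts0 ox]].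
exists ts; split => // v hv; rewrite (projection_onto_adj p_pi_projection).
apply: ox => t ht.
by have := p_pi_pop (existT _ t (om t)) v; rewrite /pop /= (hv t ht) => <-.
Qed.

Lemma horth_F_A_H_pi h : horth ip FA h -> H_pi h.
Proof.
move=> oh l1 l2 hP.
case: l1 hP => [|i l1] hP; first by rewrite (Permutation_nil hP).
have [b1 b2] := (prod_ops_bounded (i :: l1), prod_ops_bounded l2).
pose E y := prod_ops p (i :: l1) y = prod_ops p l2 y.
have E_onto : projection_onto ip (proj_onto ip E) E := proj_onto_projection ip_ax
  (subspace_eq_op b1.1 b2.1) (hclosed_eq_op ip_ax b1 b2) complete.
(* For every [om], the indices of the factors of the product witness [FA]. *)
have rFA : FA (h - proj_onto ip E h).
  apply/F_A_horth => om _; exists [seq projT1 j | j <- i :: l1]; split => // v hv.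
  exact/(projection_onto_horth ip_ax E_onto)/(fixed_space_commutes hP hv).
rewrite -(projection_onto_eq_id ip_ax E_onto (oh _ rFA)).
exact: (projection_onto_mem E_onto).
Qed.

Lemma horth_H_pi_hclosure psi : horth ip H_pi psi -> psi = 0 \/ hclosure ip FA psi.
Proof.
move=> hpsi; have [[s0]|nS] := classic (inhabited S); last first.
  (* [pi] is empty, so [H_pi] is the whole space. *)
  left; apply: (ip_self_eq0 ip_ax); apply: hpsi => l1 l2 hP.
  by case: l1 hP => [|[t a] l1] hP; [rewrite (Permutation_nil hP) | case: nS].
pose C := hclosure ip FA.
have C_onto : projection_onto ip (proj_onto ip C) C := proj_onto_projection ip_ax
  (subspace_hclosure ip_ax (subspace_F_A s0)) (hclosed_hclosure ip_ax (M:=FA)) complete.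
have hK : H_pi (psi - proj_onto ip C psi).
  apply: horth_F_A_H_pi => v FAv.
  exact/(projection_onto_horth ip_ax C_onto)/subset_hclosure.
right; rewrite -(projection_onto_eq_id ip_ax C_onto (hpsi _ hK)).
exact: (projection_onto_mem C_onto).
Qed.

Lemma hclosure_F_A_pi x : hclosure ip FApi x -> hclosure ip FA x /\ H_pi x.
Proof.
move=> hx; split; first by apply: hclosureS hx => y [].
by apply/hclosed_H_pi; apply: hclosureS hx => y [].
Qed.

Lemma hclosure_F_A_p_pi x : hclosure ip FA x -> hclosure ip FApi (p_pi x).
Proof.
apply: (hclosure_map ip_ax (is_projection_bounded ip_ax p_pi_projection.1)) => v FAv.
by split; [exact: F_A_p_pi | exact: (projection_onto_mem p_pi_projection)].
Qed.

Lemma hclosure_F_A_add_horth x w :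
  hclosure ip FA x -> horth ip H_pi w -> hclosure ip FA (x + w).
Proof.
move=> hx /horth_H_pi_hclosure [-> | hw]; first by rewrite addr0.
by have := hclosure_lin ip_ax 1 F_A_lin hx hw; rewrite scale1r.
Qed.

Lemma hclosure_F_AE phi : hclosure ip FA phi <-> hclosure ip FApi (p_pi phi).
Proof.
split=> [|/hclosure_F_A_pi [hP _]]; first exact: hclosure_F_A_p_pi.
rewrite -(subrKC (p_pi phi) phi); apply: hclosure_F_A_add_horth hP _.
exact: (projection_onto_horth ip_ax p_pi_projection).
Qed.

Lemma hclosure_F_A_sumset phi :
  hclosure ip FA phi <-> sumset (hclosure ip FApi) (horth ip H_pi) phi.
Proof.
split=> [/hclosure_F_AE hP | [v [w [/hclosure_F_A_pi [hv _] [hw ->]]]]].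
  exists (p_pi phi), (phi - p_pi phi); split => //; split; last by rewrite subrKC.
  exact: (projection_onto_horth ip_ax p_pi_projection).
exact: hclosure_F_A_add_horth.
Qed.

Lemma horth_F_AE phi : horth ip FA phi <-> capset (horth ip FApi) H_pi phi.
Proof.
split=> [hphi | [hphi Kphi] v FAv].
  split=> [v [FAv _] | ]; first exact: hphi.
  have orth : ip phi (phi - p_pi phi) = 0.
    have [-> | hw] := horth_H_pi_hclosure (projection_onto_horth ip_ax p_pi_projection phi).
      exact: ip0r.
    exact: (horth_hclosure ip_ax hphi hw).
  rewrite -(projection_onto_eq_id ip_ax p_pi_projection orth).
  exact: (projection_onto_mem p_pi_projection).
rewrite -(projection_onto_fix p_pi_projection Kphi) (projection_onto_adj p_pi_projection).
by apply: hphi; split; [exact: F_A_p_pi | exact: (projection_onto_mem p_pi_projection)].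
Qed.

Lemma capset_hclosure_F_AE phi :
  capset (hclosure ip FA) H_pi phi <-> hclosure ip FApi phi.
Proof.
split=> [[hphi Kphi] | ]; last exact: hclosure_F_A_pi.
by rewrite -(projection_onto_fix p_pi_projection Kphi); exact: hclosure_F_A_p_pi.
Qed.

End Family.

Theorem lemma2 (R : realType) (H : lmodType R[i]) (ip : H -> H -> R[i])
  (hH : hilbert_space ip)
  (S : Type) (Gamma : S -> countType) (p : forall t, Gamma t -> H -> H)
  (hp : forall t a, is_projection ip (p t a))
  (hsum : forall t, sums_to_identity ip p t)
  (A : (forall t, Gamma t) -> Prop) :
  let FA := F_A ip p A in
  let FApi := capset FA (H_pi p) in
  (forall phi, hclosure ip FA phi <-> hclosure ip FApi (p_pi ip p phi)) /\
  (forall phi, hclosure ip FA phi <-> sumset (hclosure ip FApi) (horth ip (H_pi p)) phi) /\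
  (forall phi, horth ip FA phi <-> capset (horth ip FApi) (H_pi p) phi) /\
  (forall phi, capset (hclosure ip FA) (H_pi p) phi <-> hclosure ip FApi phi).
Proof.
move=> FA FApi; have [ip_ax complete] := (hilbert_spaceP ip).1 hH.
split; first exact: (hclosure_F_AE ip_ax complete hp hsum).
split; first exact: (hclosure_F_A_sumset ip_ax complete hp hsum).
split; first exact: (horth_F_AE ip_ax complete hp hsum).
exact: (capset_hclosure_F_AE ip_ax complete hp).
Qed.
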